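(* Let $b\ge 2$ and $m\ge 0$ be integers. Consider the following nondeterministic procedure. Set $\mathcal U_1=[0,1)^2$. For $n=1,2,\ldots$: if $\mathcal U_n=\emptyset$, stop; otherwise choose an arbitrary box $X_n=\prod_{j=1}^2\left[\frac{u_j(n)}{b^m},\frac{u_j(n)+1}{b^m}\right)\subseteq \mathcal U_n$ with $u_j(n)\in\{0,1,\ldots,b^m-1\}$, and set $\mathcal U_{n+1}=\mathcal U_n\setminus\bigcup_{E\in\mathcal E_m(X_n)}E$. Then, regardless of the choices made, the procedure stops after at most $b^m$ boxes have been chosen.
   Context: An elementary $b$-adic interval in $[0,1)^s$ is a set $\prod_{j=1}^s\left[\frac{a_j}{b^{d_j}},\frac{a_j+1}{b^{d_j}}\right)$ with $d_j\in\mathbb N_0$ and $a_j\in\{0,1,\ldots,b^{d_j}-1\}$; its volume is $b^{-(d_1+\cdots+d_s)}$. For a box $X=\prod_{j=1}^s\left[\frac{u_j}{b^m},\frac{u_j+1}{b^m}\right)$, $\mathcal E_m(X)$ denotes the set of all elementary $b$-adic intervals of volume $b^{-m}$ that contain $X$ as a subset. *)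

From Stdlib Require Import Reals.
Open Scope R_scope.

Definition rset := R -> R -> Prop.

Definition rsubset (A B : rset) : Prop := forall x y, A x y -> B x y.

Definition dyadic_box (b d1 d2 a1 a2 : nat) : rset := fun x y =>
  INR a1 / INR b ^ d1 <= x < (INR a1 + 1) / INR b ^ d1 /\
  INR a2 / INR b ^ d2 <= y < (INR a2 + 1) / INR b ^ d2.

Definition elem_params (b d1 d2 a1 a2 : nat) : Prop :=
  (a1 < b ^ d1)%nat /\ (a2 < b ^ d2)%nat.

Definition gridbox (b m u1 u2 : nat) : rset := dyadic_box b m m u1 u2.

(* (d1,d2,a1,a2) describes an element of E_m(X) for X = gridbox b m u1 u2:
   an elementary b-adic interval of volume b^{-(d1+d2)} = b^{-m}, containing X. *)
Definition in_Em (b m u1 u2 d1 d2 a1 a2 : nat) : Prop :=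
  elem_params b d1 d2 a1 a2 /\ (d1 + d2)%nat = m /\
  rsubset (gridbox b m u1 u2) (dyadic_box b d1 d2 a1 a2).

Definition Em_union (b m u1 u2 : nat) : rset := fun x y =>
  exists d1 d2 a1 a2, in_Em b m u1 u2 d1 d2 a1 a2 /\ dyadic_box b d1 d2 a1 a2 x y.

Definition unit_square : rset := fun x y => 0 <= x < 1 /\ 0 <= y < 1.

(* Uset b m u k = U_{k+1} of the paper, where the boxes chosen are
   X_{n+1} = gridbox b m (fst (u n)) (snd (u n)) (0-based index n). *)
Fixpoint Uset (b m : nat) (u : nat -> nat * nat) (k : nat) : rset :=
  match k with
  | O => unit_square
  | S k' => fun x y => Uset b m u k' x y /\ ~ Em_union b m (fst (u k')) (snd (u k')) x y
  end.

From Stdlib Require Import Reals Lra Lia List.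
Open Scope R_scope.

(* Every chosen box X_n lies in the column [u_1(n)/b^m, (u_1(n)+1)/b^m) x [0,1),
   which is itself an element of E_m(X_n). Hence once X_n is chosen, its whole
   column is removed, so no later box can share its first coordinate; the first
   coordinates of the chosen boxes are pairwise distinct elements of
   {0, ..., b^m - 1}, and there are at most b^m of them. *)

Lemma Uset_not_Em_union (b m : nat) (u : nat -> nat * nat) (n k : nat) (x y : R) :
  Uset b m u n x y -> (k < n)%nat -> ~ Em_union b m (fst (u k)) (snd (u k)) x y.
Proof.
  revert k; induction n as [|n IH]; intros k HU Hk; [lia|].
  destruct HU as [HU Hn].
  destruct (Nat.eq_dec k n) as [->|Hne]; [exact Hn|].
  apply IH; [exact HU|lia].
Qed.

Lemma gridbox_corner (b m u1 u2 : nat) : (0 < b)%nat ->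
  gridbox b m u1 u2 (INR u1 / INR b ^ m) (INR u2 / INR b ^ m).
Proof.
  intros hb.
  assert (B : 0 < INR b ^ m) by (apply pow_lt, lt_0_INR; exact hb).
  split; split; try lra; apply Rmult_lt_compat_r; [apply Rinv_0_lt_compat| |
    apply Rinv_0_lt_compat|]; lra.
Qed.

Lemma gridbox_sub_column (b m u1 u2 : nat) : (0 < b)%nat -> (u2 < b ^ m)%nat ->
  rsubset (gridbox b m u1 u2) (dyadic_box b m 0 u1 0).
Proof.
  intros hb hu2 x y [Hx [Hy1 Hy2]]; split; [exact Hx|].
  assert (B : 0 < INR b ^ m) by (apply pow_lt, lt_0_INR; exact hb).
  assert (Hu : INR u2 + 1 <= INR b ^ m).
  { rewrite <- pow_INR, <- S_INR; apply le_INR; lia. }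
  simpl; rewrite !Rdiv_1_r; split.
  - apply Rle_trans with (2 := Hy1), Rmult_le_pos;
      [apply pos_INR | left; apply Rinv_0_lt_compat; exact B].
  - apply Rlt_le_trans with (1 := Hy2).
    apply (Rmult_le_reg_r (INR b ^ m)); [exact B|].
    unfold Rdiv; rewrite Rmult_assoc, Rinv_l; lra.
Qed.

Lemma column_in_Em (b m u1 u2 : nat) : (0 < b)%nat ->
  (u1 < b ^ m)%nat -> (u2 < b ^ m)%nat -> in_Em b m u1 u2 m 0 u1 0.
Proof.
  intros hb hu1 hu2; split; [split; simpl; lia|split; [lia|]].
  apply gridbox_sub_column; assumption.
Qed.

Lemma Em_union_column (b m u1 u2 : nat) (x y : R) : (0 < b)%nat ->
  (u1 < b ^ m)%nat -> (u2 < b ^ m)%nat ->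
  dyadic_box b m 0 u1 0 x y -> Em_union b m u1 u2 x y.
Proof.
  intros hb hu1 hu2 Hxy; exists m, 0%nat, u1, 0%nat.
  split; [apply column_in_Em|]; assumption.
Qed.

Lemma injective_bounded_le (f : nat -> nat) (N M : nat) :
  (forall n, (n < N)%nat -> (f n < M)%nat) ->
  (forall i j, (i < j)%nat -> (j < N)%nat -> f i <> f j) ->
  (N <= M)%nat.
Proof.
  intros Hbound Hinj.
  assert (Hnodup : NoDup (map f (seq 0 N))).
  { apply NoDup_map_NoDup_ForallPairs; [|apply seq_NoDup].
    intros i j Hi Hj Hij; apply in_seq in Hi, Hj.
    destruct (Nat.lt_trichotomy i j) as [h|[h|h]]; [|exact h|].
    - exfalso; exact (Hinj i j h ltac:(lia) Hij).
    - exfalso; exact (Hinj j i h ltac:(lia) (eq_sym Hij)). }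
  assert (Hincl : incl (map f (seq 0 N)) (seq 0 M)).
  { intros z Hz; apply in_map_iff in Hz as [i [<- Hi]]; apply in_seq in Hi.
    apply in_seq; specialize (Hbound i ltac:(lia)); lia. }
  pose proof (NoDup_incl_length Hnodup Hincl) as L.
  rewrite length_map, !length_seq in L; exact L.
Qed.

Theorem mainTheorem2 (b m : nat) (hb : (2 <= b)%nat)
  (u : nat -> nat * nat) (N : nat)
  (hrun : forall n : nat, (n < N)%nat ->
     (fst (u n) < b ^ m)%nat /\ (snd (u n) < b ^ m)%nat /\
     rsubset (gridbox b m (fst (u n)) (snd (u n))) (Uset b m u n)) :
  (N <= b ^ m)%nat.
Proof.
  assert (hb0 : (0 < b)%nat) by lia.
  apply (injective_bounded_le (fun n => fst (u n))); [intros n hn; apply hrun, hn|].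
  intros k n hkn hn Hcol.
  destruct (hrun n hn) as [hu1 [hu2 Hsub]].
  destruct (hrun k ltac:(lia)) as [hk1 [hk2 _]].
  pose proof (gridbox_corner b m (fst (u n)) (snd (u n)) hb0) as Hcorner.
  apply (Uset_not_Em_union b m u n k _ _ (Hsub _ _ Hcorner) hkn).
  apply Em_union_column; try assumption.
  rewrite Hcol; exact (gridbox_sub_column _ _ _ _ hb0 hu2 _ _ Hcorner).
Qed.
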